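(* Let $G \ne K_4$ be a connected, claw-free, cubic graph, and let $u(G)$ denote the number of units of $G$. Then \[ u(G)+1 \le \sigma_{(2,1)}(G) \le u(G)+2 . \]
   Context: A graph is claw-free if it has no induced subgraph isomorphic to $K_{1,3}$; it is cubic if every vertex has degree $3$. A diamond is an induced subgraph isomorphic to $K_4$ minus one edge. For a connected, claw-free, cubic graph $G\neq K_4$, the vertex set $V(G)$ can be uniquely partitioned into sets each of which induces a triangle or a diamond in $G$; the parts of this partition are called units (triangle-units and diamond-units), and $u(G)$ is the number of units. $(p,q)$-spreading: let $p\in\mathbb{N}$ and $q\in\mathbb{N}\cup\{\infty\}$. Start with a set $S\subseteq V(G)$ of blue vertices, all other vertices white. The color change rule: if a white vertex $w$ has at least $p$ blue neighbors, and at least one of the blue neighbors of $w$ has at most $q$ white neighbors, then $w$ is recolored blue. $S$ is a $(p,q)$-spreading set if repeatedly applying this rule eventually colors all vertices blue. $\sigma_{(p,q)}(G)$ is the minimum cardinality of a $(p,q)$-spreading set of $G$. *)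

From mathcomp Require Import all_boot.
Set Implicit Arguments. Unset Strict Implicit. Unset Printing Implicit Defensive.

(* A finite simple graph: vertex type T : finType, adjacency e : rel T,
   assumed symmetric and irreflexive (hypotheses of the theorem). *)
Section Graphs.
Variables (T : finType) (e : rel T).

Definition nbhd (v : T) : {set T} := [set w | e v w].

Definition simple_graph : Prop := symmetric e /\ irreflexive e.

Definition cubic : Prop := forall v, #|nbhd v| = 3.

Definition connected_graph : Prop :=
  0 < #|T| /\ forall x y, connect e x y.

Definition claw_free : Prop :=
  ~ exists v a b c,
      [/\ e v a, e v b, e v c & [/\ a != b, a != c & b != c]] /\
      [/\ ~~ e a b, ~~ e a c & ~~ e b c].

Definition is_K4 : Prop := #|T| = 4 /\ forall x y, x != y -> e x y.

Definition induces_triangle (X : {set T}) : bool :=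
  (#|X| == 3) && [forall x in X, forall y in X, (x != y) ==> e x y].

Definition induces_diamond (X : {set T}) : bool :=
  (#|X| == 4) &&
  [exists a in X, exists b in X,
     [&& a != b, ~~ e a b &
      [forall x in X, forall y in X,
         (x != y) ==> (e x y || ([set x; y] == [set a; b]))]]].

Definition unit_partition (P : {set {set T}}) : bool :=
  partition P [set: T] &&
  [forall B in P, induces_triangle B || induces_diamond B].

(* One round of the colour change rule applied to every
   eligible white vertex simultaneously; since the rule is monotone in the
   blue set, this yields the same final colouring as one-at-a-time
   application. *)
Definition spread_step (p q : nat) (B : {set T}) : {set T} :=
  B :|: [set w | (w \notin B) && (p <= #|nbhd w :&: B|)
                 && [exists v in nbhd w :&: B, #|nbhd v :\: B| <= q]].

Definition spread_closure (p q : nat) (S : {set T}) : {set T} :=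
  iter #|T| (spread_step p q) S.

Definition spreading_set (p q : nat) (S : {set T}) : bool :=
  spread_closure p q S == [set: T].

Lemma spreading_setT p q : spreading_set p q [set: T].
Proof.
rewrite /spreading_set /spread_closure; elim: #|T| => //= n /eqP ->.
by apply/eqP/setP => x; rewrite !inE.
Qed.

Definition sigma_pq (p q : nat) : nat :=
  #|[arg min_(S < [set: T] | spreading_set p q S) #|S|]|.

End Graphs.

From mathcomp Require Import all_boot zify.
Set Implicit Arguments. Unset Strict Implicit. Unset Printing Implicit Defensive.

(* Every vertex of a unit has at least two neighbours inside its unit, hence at
   most one outside.  It is convenient to argue with sets closed under the colour
   change rule: the final blue set of S is the least closed set containing S.

   Lower bound: if S misses a unit B, the complement of B is closed (a vertex of B
   sees at most one vertex outside B), so every spreading set meets every unit.  If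
   it met every unit exactly once, each blue vertex would have two white neighbours
   in its unit and S itself would be closed.  Hence sigma >= u + 1.

   Upper bound: three vertices force a unit (a triangle, or a diamond minus one of
   its two non-adjacent vertices).  Once a unit is blue, each of its vertices has
   at most one white neighbour, so one extra blue vertex in an adjacent unit
   forces that unit too.  Growing along edges leaving the blue part,
   connectivity gives sigma <= u + 2.

   Claw-freeness and G <> K4 only guarantee that the unit partition exists, which
   the statement assumes. *)

Section Spreading.
Variables (T : finType) (e : rel T) (p q : nat).
Local Notation step := (spread_step e p q).

Definition spread_closed (F : {set T}) : bool := step F \subset F.

Definition forces (S X : {set T}) : Prop :=
  forall F, spread_closed F -> S \subset F -> X \subset F.

Lemma spread_step_min (A F : {set T}) :
  spread_closed F -> A \subset F -> step A \subset F.
Proof.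
move=> /subsetP clF AF; apply/subsetP => w; rewrite in_setU => /orP[/(subsetP AF)//|].
rewrite inE => /andP[/andP[_ pA] /exists_inP[v vA vq]].
apply: clF; rewrite in_setU inE; case: (w \in F) => //=.
apply/andP; split; first exact: leq_trans pA (subset_leq_card (setIS _ AF)).
apply/exists_inP; exists v; first exact: subsetP (setIS _ AF) v vA.
exact: leq_trans (subset_leq_card (setDS _ AF)) vq.
Qed.

Lemma spread_closure_min (S F : {set T}) :
  spread_closed F -> S \subset F -> spread_closure e p q S \subset F.
Proof.
move=> clF SF; rewrite /spread_closure; elim: #|T| => //= n IH.
exact: spread_step_min.
Qed.

Lemma iter_spread_sub (S : {set T}) n : S \subset iter n step S.
Proof.
elim: n => [|n IH] /=; first exact: subxx.
exact: subset_trans IH (subsetUl _ _).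
Qed.

Lemma iter_spread_fixed_or_large (S : {set T}) n :
  step (iter n step S) = iter n step S \/ n <= #|iter n step S|.
Proof.
elim: n => [|n IH] /=; first by right.
set X := iter n step S; have [fixX|growX] := eqVneq (step X) X.
  by left; rewrite fixX fixX.
right; have [/eqP|leX] := IH; first by rewrite (negbTE growX).
apply: leq_ltn_trans leX (proper_card _).
by rewrite properEneq eq_sym growX subsetUl.
Qed.

Lemma spread_closure_closed (S : {set T}) : spread_closed (spread_closure e p q S).
Proof.
rewrite /spread_closed /spread_closure.
have [-> //|full] := iter_spread_fixed_or_large S #|T|.
suff -> : iter #|T| step S = [set: T] by apply: subsetT.
by apply/eqP; rewrite eqEcard subsetT cardsT full.
Qed.

Lemma spreading_setP (S : {set T}) :
  reflect (forces S [set: T]) (spreading_set e p q S).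
Proof.
rewrite /spreading_set eqEsubset subsetT /=; apply: (iffP idP) => [spS F clF SF|].
  exact: subset_trans spS (spread_closure_min clF SF).
by apply; [apply: spread_closure_closed | apply: iter_spread_sub].
Qed.

Lemma forces_setU (S X S' Y : {set T}) :
  forces S X -> forces (S' :|: X) Y -> forces (S' :|: S) (X :|: Y).
Proof.
move=> SX SXY F clF; rewrite subUset => /andP[S'F SF].
have XF := SX F clF SF.
by rewrite subUset XF (SXY F clF) // subUset S'F.
Qed.

Lemma sigma_pq_min (S : {set T}) : spreading_set e p q S -> sigma_pq e p q <= #|S|.
Proof.
rewrite /sigma_pq; case: arg_minnP => [|Smin _ minS]; first exact: spreading_setT.
exact: minS.
Qed.

Lemma sigma_pq_spec : exists2 S, spreading_set e p q S & sigma_pq e p q = #|S|.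
Proof.
rewrite /sigma_pq; case: arg_minnP => [|Smin spS _]; first exact: spreading_setT.
by exists Smin.
Qed.

End Spreading.

Section CubicUnits.
Variables (T : finType) (e : rel T).
Hypotheses (e_sym : symmetric e) (e_cubic : cubic e).
Local Notation closed := (spread_closed e 2 1).

Definition is_unit (X : {set T}) : bool :=
  induces_triangle e X || induces_diamond e X.

Lemma nbhd_pair_gt1 (A : {set T}) v r r' :
  e v r -> e v r' -> r != r' -> r \in A -> r' \in A -> 1 < #|nbhd e v :&: A|.
Proof.
by move=> vr vr' rr' rA r'A; apply/card_gt1P; exists r, r'; rewrite !inE vr vr' rA r'A.
Qed.

Lemma card_nbhdD_le1 (A : {set T}) v :
  1 < #|nbhd e v :&: A| -> #|nbhd e v :\: A| <= 1.
Proof. have := cardsID A (nbhd e v); rewrite e_cubic; lia. Qed.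

Lemma closed_force F v w w' :
  closed F -> e w v -> e w w' -> v != w' -> v \in F -> w' \in F ->
  1 < #|nbhd e v :&: F| -> w \in F.
Proof.
move=> /subsetP clF wv ww' vw' vF w'F vsat.
apply: clF; rewrite in_setU inE; case: (w \in F) => //=.
rewrite (nbhd_pair_gt1 wv ww' vw' vF w'F) /=.
by apply/exists_inP; exists v; rewrite ?inE ?wv ?vF ?card_nbhdD_le1.
Qed.

Lemma triangle_adj X x y :
  induces_triangle e X -> x \in X -> y \in X -> x != y -> e x y.
Proof.
case/andP=> _ /forall_inP adj xX yX.
by move/forall_inP: (adj x xX) => /(_ y yX)/implyP.
Qed.

Lemma triangle_set3 X v : induces_triangle e X -> v \in X ->
  exists s t, [/\ X = [set v; s; t], s != t, s != v & t != v].
Proof.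
case/andP=> /eqP X3 _ vX.
have /cards2P[s [t [st Xv]]] : #|X :\ v| == 2.
  by rewrite (cardsD1 v) vX in X3; apply/eqP; lia.
have : s \in X :\ v /\ t \in X :\ v by rewrite Xv !inE !eqxx orbT.
rewrite !inE => -[/andP[sv _] /andP[tv _]]; exists s, t; split => //.
by rewrite -(setD1K vX) Xv setUA.
Qed.

Lemma diamond_hubs X : induces_diamond e X -> exists a c d,
  [/\ #|X| = 4, [/\ a \in X, c \in X & d \in X], [/\ a != c, a != d & c != d],
      {in X, forall y, y != c -> e c y} & {in X, forall y, y != d -> e d y}].
Proof.
case/andP=> /eqP X4 /exists_inP[a aX /exists_inP[b bX /and3P[ab nab adj]]].
have /cards2P[c [d [cd Xab]]] : #|X :\: [set a; b]| == 2.
  have abX : [set a; b] \subset X by rewrite subUset !sub1set aX bX.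
  by rewrite cardsD (setIidPr abX) cards2 ab X4.
have : c \in X :\: [set a; b] /\ d \in X :\: [set a; b] by rewrite Xab !inE !eqxx orbT.
rewrite !inE => -[/andP[/norP[ca cb] cX] /andP[/norP[da db] dX]].
have hub z : z \in X -> z != a -> z != b -> {in X, forall y, y != z -> e z y}.
  move=> zX za zb y yX yz; move/forall_inP: adj => /(_ z zX)/forall_inP/(_ y yX).
  rewrite eq_sym yz /= => /orP[//|/eqP zy_ab].
  by have := setU11 z [set y]; rewrite zy_ab !inE (negbTE za) (negbTE zb).
by exists a, c, d; split; rewrite ?(eq_sym a) ?ca ?da //; apply: hub.
Qed.

Lemma unit_two_nbrs X v : is_unit X -> v \in X -> exists r r',
  [/\ [/\ r \in X, r' \in X & r != r'], r != v /\ r' != v & e v r && e v r'].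
Proof.
case/orP=> [tri|/diamond_hubs[a [c [d [_ [aX cX dX] [ac ad cd] hc hd]]]]] vX.
  have [s [t [X3 st sv tv]]] := triangle_set3 tri vX.
  have [sX tX] : s \in X /\ t \in X by rewrite X3 !inE !eqxx !orbT.
  by exists s, t; rewrite !(triangle_adj tri) // ?(eq_sym v).
have [ca da dc] : [/\ c != a, d != a & d != c] by rewrite eq_sym ac eq_sym ad eq_sym cd.
have [-> | vc] := eqVneq v c; first by exists d, a; rewrite !hc.
have [-> | vd] := eqVneq v d; first by exists c, a; rewrite !hd.
by exists c, d; rewrite e_sym hc // e_sym hd // (eq_sym c v) (eq_sym d v) vc vd.
Qed.

Lemma unit_card_gt1 (X : {set T}) : is_unit X -> 1 < #|X|.
Proof. by case/orP=> /andP[/eqP-> _]. Qed.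

Lemma unit_nbhdD_le1 (X : {set T}) w :
  is_unit X -> w \in X -> #|nbhd e w :\: X| <= 1.
Proof.
move=> uX wX; have [r [r' [[rX r'X rr'] _ /andP[wr wr']]]] := unit_two_nbrs uX wX.
exact/card_nbhdD_le1/(nbhd_pair_gt1 wr wr' rr').
Qed.

Lemma hub_nbhd (X : {set T}) c x :
  #|X| = 4 -> c \in X -> {in X, forall y, y != c -> e c y} -> e c x -> x \in X.
Proof.
move=> X4 cX hc cx; case xX: (x \in X) => //.
suff : 4 <= #|nbhd e c| by rewrite e_cubic.
have <- : #|x |: (X :\ c)| = 4.
  by rewrite cardsU1 !inE xX andbF (cardsD1 c X) cX in X4 *; lia.
apply/subset_leq_card/subsetP => y; rewrite !inE => /orP[/eqP-> //|/andP[yc yX]].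
exact: hc.
Qed.

Lemma diamond_force (F X : {set T}) a c d : closed F ->
  [/\ a \in X, c \in X & d \in X] -> [/\ a != c, a != d & c != d] ->
  {in X, forall y, y != c -> e c y} -> {in X, forall y, y != d -> e d y} ->
  [/\ a \in F, c \in F & d \in F] -> X \subset F.
Proof.
move=> clF [aX cX dX] [ac ad cd] hc hd [aF cF dF]; apply/subsetP => y yX.
have [-> //|yc] := eqVneq y c; have [-> //|yd] := eqVneq y d.
apply: (closed_force clF _ _ cd cF dF); rewrite 1?e_sym ?hc ?hd //.
by apply: (nbhd_pair_gt1 _ _ ad aF dF); rewrite hc // eq_sym.
Qed.

Lemma unit_seed (X : {set T}) :
  is_unit X -> exists2 S0 : {set T}, #|S0| <= 3 & forces e 2 1 S0 X.
Proof.
case/orP=> [/andP[/eqP X3 _] | /diamond_hubs[a [c [d [_ Xacd acd hc hd]]]]].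
  by exists X; rewrite ?X3 // => F _.
exists [set a; c; d].
  by case: acd => ac ad cd; rewrite -setUA cardsU1 cards2 !inE negb_or ac ad cd.
move=> F clF; rewrite !subUset !sub1set => /andP[/andP[aF cF] dF].
exact: diamond_force clF Xacd acd hc hd (And3 aF cF dF).
Qed.

Lemma unit_attach (X : {set T}) x x' :
  is_unit X -> x' \in X -> x \notin X -> e x x' ->
  exists s, forall F, closed F -> s \in F -> x \in F -> 1 < #|nbhd e x :&: F| ->
    X \subset F.
Proof.
move=> + x'X xX xx'.
have xN y : y \in X -> x != y by move=> yX; apply: contraNneq xX => ->.
case/orP=> [tri | /diamond_hubs[a [c [d [X4 [aX cX dX] [ac ad cd] hc hd]]]]].
  have [s [t [X3 st sx' tx']]] := triangle_set3 tri x'X.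
  have [sX tX] : s \in X /\ t \in X by rewrite X3 !inE !eqxx !orbT.
  exists s => F clF sF xF xsat.
  have x'F : x' \in F.
    apply: (closed_force clF _ _ (xN s sX) xF sF xsat); first by rewrite e_sym.
    by rewrite (triangle_adj tri) // eq_sym.
  have tF : t \in F.
    apply: (closed_force clF _ _ _ x'F sF); rewrite ?(triangle_adj tri) // 1?eq_sym //.
    apply: (nbhd_pair_gt1 _ _ (xN s sX) xF sF); first by rewrite e_sym.
    by rewrite (triangle_adj tri) // eq_sym.
  by rewrite X3 !subUset !sub1set x'F sF tF.
have x'c : x' != c.
  by apply: contraNneq xX => x'c; rewrite (hub_nbhd X4 cX hc) // e_sym -x'c.
have x'd : x' != d.
  by apply: contraNneq xX => x'd; rewrite (hub_nbhd X4 dX hd) // e_sym -x'd.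
exists c => F clF cF xF xsat.
have x'F : x' \in F.
  by apply: (closed_force clF _ _ (xN c cX) xF cF xsat); rewrite 1?e_sym // hc.
have dF : d \in F.
  apply: (closed_force clF _ _ x'c x'F cF); rewrite ?hd // 1?eq_sym //.
  by apply: (nbhd_pair_gt1 _ _ (xN c cX) xF cF); rewrite 1?e_sym // hc.
exact: diamond_force clF (And3 x'X cX dX) (And3 x'c x'd cd) hc hd (And3 x'F cF dF).
Qed.

Lemma spreading_set_meets_unit (B S : {set T}) :
  is_unit B -> spreading_set e 2 1 S -> B :&: S != set0.
Proof.
move=> uB /spreading_setP SforcesT; apply/negP => /eqP BS0.
case/card_gt0P: (ltnW (unit_card_gt1 uB)) => x xB.
suff /subsetP/(_ x (in_setT x)) : [set: T] \subset ~: B by rewrite inE xB.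
apply: SforcesT; last by rewrite -disjoints_subset -setI_eq0 setIC BS0.
apply/subsetP => w; rewrite in_setU => /orP[//|]; rewrite !inE negbK.
move=> /andP[/andP[wB w2] _]; have := unit_nbhdD_le1 uB wB; rewrite setDE; lia.
Qed.

End CubicUnits.

Lemma connect_boundary (T : finType) (e : rel T) (A : {set T}) x y :
  connect e x y -> x \in A -> y \notin A ->
  exists u v, [/\ u \in A, v \notin A & e u v].
Proof.
case/connectP=> s + ->; elim: s x => [|z s IH] x /=; first by move=> _ ->.
case/andP=> xz zs xA; have [zA|zA] := boolP (z \in A); first exact: IH zs zA.
by exists x, z.
Qed.

Section UnitPartition.
Variables (T : finType) (e : rel T) (P : {set {set T}}).
Hypotheses (e_sym : symmetric e) (e_cubic : cubic e).
Hypothesis e_conn : forall x y, connect e x y.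
Hypotheses (P_part : partition P [set: T]) (P_units : {in P, forall B, is_unit e B}).

Let P_triv : trivIset P := partition_trivIset P_part.
Let P_cover : cover P = [set: T] := cover_partition P_part.

Lemma card_partition_setI (S : {set T}) : #|S| = \sum_(B in P) #|B :&: S|.
Proof.
rewrite -sum1_card.
transitivity (\sum_(x in [set: T] | x \in S) 1).
  by apply: eq_bigl => x; rewrite inE.
rewrite (set_partition_big_cond _ P_part); apply: eq_bigr => B _.
by rewrite -sum1_card; apply: eq_bigl => x; rewrite inE.
Qed.

Lemma sparse_closed (S : {set T}) :
  {in P, forall B, #|B :&: S| <= 1} -> spread_closed e 2 1 S.
Proof.
move=> sparse; apply/subsetP => w; rewrite in_setU => /orP[//|].
rewrite inE => /andP[_ /exists_inP[v]]; rewrite inE => /andP[_ vS].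
have vB : v \in pblock P v by rewrite mem_pblock P_cover.
have BP : pblock P v \in P by rewrite pblock_mem ?P_cover.
have notS y : y \in pblock P v -> y != v -> y \notin S.
  move=> yB yv; apply: contraTN (sparse _ BP) => yS; rewrite -ltnNge.
  by apply/card_gt1P; exists y, v; rewrite !inE yB yS vB vS.
have [r [r' [[rB r'B rr'] [rv r'v] /andP[vr vr']]]] :=
  unit_two_nbrs e_sym (P_units BP) vB.
rewrite leqNgt => /negP[]; apply/card_gt1P.
by exists r, r'; rewrite !inE vr vr' !notS.
Qed.

Lemma spreading_set_card_gt (S : {set T}) :
  0 < #|P| -> spreading_set e 2 1 S -> #|P| < #|S|.
Proof.
move=> P_gt0 spS.
have meet B : B \in P -> 0 < #|B :&: S|.
  by move=> BP; rewrite card_gt0 (spreading_set_meets_unit e_sym e_cubic (P_units BP)).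
have [B BP B2] : exists2 B, B \in P & 1 < #|B :&: S|.
  apply/exists_inP/contraT => /exists_inPn sparse.
  have sparse1 : {in P, forall B, #|B :&: S| <= 1} by move=> B BP; rewrite leqNgt sparse.
  have : [set: T] \subset S.
    by apply: (elimT (spreading_setP e 2 1 S) spS); [apply: sparse_closed|].
  rewrite subTset => /eqP ST; case/card_gt0P: P_gt0 => B BP.
  by have := sparse1 B BP; rewrite ST setIT leqNgt (unit_card_gt1 (P_units BP)).
rewrite card_partition_setI -sum1_card (bigD1 B BP) [X in _ < X](bigD1 B BP) /=.
rewrite -addSn leq_add //; apply: leq_sum => B' /andP[B'P _]; exact: meet.
Qed.

Lemma cover_boundary_edge (U : {set {set T}}) :
  U \subset P -> U != set0 -> U != P ->
  exists x x', [/\ x \in cover U, x' \notin cover U & e x x'].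
Proof.
move=> UP /set0Pn[A AU] UneqP.
have AP : A \in P := subsetP UP A AU.
case/card_gt0P: (ltnW (unit_card_gt1 (P_units AP))) => x xA.
have [B BP BU] : exists2 B, B \in P & B \notin U.
  by apply/subsetPn; apply: contra UneqP => PU; rewrite eqEsubset UP.
case/card_gt0P: (ltnW (unit_card_gt1 (P_units BP))) => y yB.
apply: (connect_boundary (e_conn x y)); first by apply/bigcupP; exists A.
apply/bigcupP => -[C CU yC]; move: BU.
by rewrite -(def_pblock P_triv BP yB) (def_pblock P_triv (subsetP UP C CU) yC) CU.
Qed.

Lemma forces_adjacent_unit (U : {set {set T}}) :
  U \subset P -> U != set0 -> U != P ->
  exists B s, [/\ B \in P, B \notin U & forces e 2 1 (s |: cover U) B].
Proof.
move=> UP Un0 UneqP.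
have [x [x' [/bigcupP[A AU xA] x'U xx']]] := cover_boundary_edge UP Un0 UneqP.
have AP : A \in P := subsetP UP A AU.
have B'P : pblock P x' \in P by rewrite pblock_mem ?P_cover.
have x'B' : x' \in pblock P x' by rewrite mem_pblock P_cover.
have B'U : pblock P x' \notin U.
  by apply: contra x'U => B'U; apply/bigcupP; exists (pblock P x').
have xB' : x \notin pblock P x'.
  apply: contra B'U => xB'.
  by rewrite -(def_pblock P_triv B'P xB') (def_pblock P_triv AP xA).
have [s attach] := unit_attach e_sym e_cubic (P_units B'P) x'B' xB' xx'.
exists (pblock P x'), s; split=> // F clF; rewrite subUset sub1set => /andP[sF UF].
have AF : A \subset F := subset_trans (bigcup_sup A AU) UF.
have [r [r' [[rA r'A rr'] _ /andP[xr xr']]]] := unit_two_nbrs e_sym (P_units AP) xA.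
apply: attach => //; first exact: subsetP AF x xA.
exact: nbhd_pair_gt1 xr xr' rr' (subsetP AF r rA) (subsetP AF r' r'A).
Qed.

Lemma forces_units k : 0 < k <= #|P| -> exists (U : {set {set T}}) (S : {set T}),
  [/\ U \subset P, #|U| = k, #|S| <= k + 2 & forces e 2 1 S (cover U)].
Proof.
elim: k => [//|[_ /andP[_]|k IH /andP[_ kP]]].
  case/card_gt0P=> A AP; have [S0 S0_le3 S0A] := unit_seed e_sym e_cubic (P_units AP).
  by exists [set A], S0; rewrite sub1set cards1 cover1.
have [U [S [UP Uk Sk SU]]] := IH (ltnW kP).
have Un0 : U != set0 by rewrite -card_gt0 Uk.
have UneqP : U != P by apply: contraTneq kP => <-; rewrite Uk ltnn.
have [B [s [BP BU sUB]]] := forces_adjacent_unit UP Un0 UneqP.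
exists (B |: U), (s |: S); split.
- by rewrite subUset sub1set BP UP.
- by rewrite cardsU1 BU Uk.
- by rewrite cardsU1; have := leq_b1 (s \notin S); lia.
- by rewrite /cover bigcup_setU big_set1 (setUC B); apply: forces_setU.
Qed.

Lemma spreading_set_small :
  0 < #|P| -> exists2 S : {set T}, #|S| <= #|P| + 2 & spreading_set e 2 1 S.
Proof.
move=> P_gt0.
have /forces_units[U [S [UP Uk Sk SU]]] : 0 < #|P| <= #|P| by rewrite P_gt0 /=.
have UeqP : U = P by apply/eqP; rewrite eqEcard UP Uk leqnn.
by exists S => //; apply/spreading_setP; rewrite -P_cover -UeqP.
Qed.

End UnitPartition.

Theorem theorem4p9 (T : finType) (e : rel T) (P : {set {set T}}) :
  simple_graph e -> connected_graph e -> cubic e -> claw_free e ->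
  ~ is_K4 e -> unit_partition e P ->
  #|P| + 1 <= sigma_pq e 2 1 <= #|P| + 2.
Proof.
move=> [e_sym _] [T_gt0 e_conn] e_cubic _ _ /andP[P_part /forall_inP P_units].
have P_gt0 : 0 < #|P|.
  case/card_gt0P: T_gt0 => t _; apply/card_gt0P; exists (pblock P t).
  by rewrite pblock_mem // (cover_partition P_part).
rewrite addn1; apply/andP; split.
  have [S spS ->] := sigma_pq_spec e 2 1.
  exact: (spreading_set_card_gt e_sym e_cubic P_part P_units P_gt0 spS).
have [S S_small spS] := spreading_set_small e_sym e_cubic e_conn P_part P_units P_gt0.
exact: leq_trans (sigma_pq_min spS) S_small.
Qed.
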